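(* If $\mathcal F=(A,X,f)$ and $\mathcal G=(B,X,g)$ are complete D2-directable fuzzy automata, then their direct product $\mathcal F\times\mathcal G$ is D2-directable.
   Context: A fuzzy automaton is a triple $\mathcal F=(A,X,f)$ with $A$ a finite nonempty set of states, $X$ a finite nonempty alphabet, and $f:A\times X\times A\to[0,1]$, extended to words by $f^*(a,\varepsilon,a)=1$, $f^*(a,\varepsilon,b)=0$ ($b\neq a$), $f^*(a,vx,b)=\max_{c\in A}\min\{f^*(a,v,c),f(c,x,b)\}$. Let $\mathcal F(a,w)=\{b\in A\mid f^*(a,w,b)>0\}$. $\mathcal F$ is complete if $\mathcal F(a,x)\neq\emptyset$ for all $a\in A$, $x\in X$. $\mathcal F$ is D2-directable if there is $w\in X^*$ with $\mathcal F(a,w)=\mathcal F(b,w)$ for all $a,b\in A$. The direct product is $\mathcal F\times\mathcal G=(A\times B,X,h)$ with $h((a,b),x,(a',b'))=\min\{f(a,x,a'),g(b,x,b')\}$. *)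

From mathcomp Require Import all_boot all_order all_algebra.
Set Implicit Arguments. Unset Strict Implicit. Unset Printing Implicit Defensive.
Import Order.TTheory GRing.Theory Num.Theory.
Local Open Scope ring_scope.

Record fuzzy_automaton (R : realFieldType) (X : finType) := FuzzyAutomaton {
  fa_state :> finType;
  fa_trans : fa_state -> X -> fa_state -> R;
  fa_state_nonempty : (0 < #|fa_state|)%N;
  fa_trans_range : forall a x b, 0 <= fa_trans a x b <= 1 }.

(* The max is a big max with base 0,
   which is harmless since all values are >= 0 and the state set is nonempty. *)
Definition ext_step (R : realFieldType) (S X : finType) (f : S -> X -> S -> R)
  (g : S -> R) (x : X) : S -> R :=
  fun b => \big[Order.max/0]_(c : S) Order.min (g c) (f c x b).

(* f^*(a, w, b): f^*(a, eps, b) = [a == b], f^*(a, vx, b) = max_c min(f^*(a,v,c), f(c,x,b)). *)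
Definition ext_trans (R : realFieldType) (S X : finType) (f : S -> X -> S -> R)
  (a : S) (w : seq X) : S -> R :=
  foldl (ext_step f) (fun b => if a == b then 1 else 0) w.

Definition reach (R : realFieldType) (X : finType) (F : fuzzy_automaton R X)
  (a : F) (w : seq X) : {set F} :=
  [set b | 0 < ext_trans (@fa_trans R X F) a w b].

Definition complete_fa (R : realFieldType) (X : finType) (F : fuzzy_automaton R X) :=
  forall (a : F) (x : X), reach a [:: x] != set0.

Definition D2_directable (R : realFieldType) (X : finType) (F : fuzzy_automaton R X) :=
  exists w : seq X, forall a b : F, reach a w = reach b w.

Definition prod_trans (R : realFieldType) (X : finType) (F G : fuzzy_automaton R X)
  (p : (F * G)%type) (x : X) (q : (F * G)%type) : R :=
  Order.min (fa_trans p.1 x q.1) (fa_trans p.2 x q.2).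

Lemma prod_state_nonempty (R : realFieldType) (X : finType) (F G : fuzzy_automaton R X) :
  (0 < #|{: (F * G)%type}|)%N.
Proof.
rewrite card_prod muln_gt0; apply/andP; split; exact: fa_state_nonempty.
Qed.

Lemma prod_trans_range (R : realFieldType) (X : finType) (F G : fuzzy_automaton R X) p x q :
  0 <= @prod_trans R X F G p x q <= 1.
Proof.
rewrite /prod_trans.
have /andP[h1 h2] := fa_trans_range p.1 x q.1.
have /andP[h3 h4] := fa_trans_range p.2 x q.2.
by rewrite le_min h1 h3 ge_min h2.
Qed.

Definition prod_fa (R : realFieldType) (X : finType) (F G : fuzzy_automaton R X)
  : fuzzy_automaton R X :=
  @FuzzyAutomaton R X (F * G)%type (@prod_trans R X F G)
    (prod_state_nonempty F G) (@prod_trans_range R X F G).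

(** The positive support of f^*(a, w, .) evolves like a nondeterministic
    automaton: it is the set of states reachable from a along w through
    transitions of positive weight, and on the product it is the Cartesian
    product of the supports.  If u directs F then so does every u ++ v.  If v
    directs G and G is complete, then G(a, u ++ v) is the union of the G(c, v)
    over the nonempty set G(a, u), hence the common value of G(., v), so u ++ v
    directs G as well.  Then u ++ v directs F x G. *)

From mathcomp Require Import all_boot all_order all_algebra.
Set Implicit Arguments. Unset Strict Implicit. Unset Printing Implicit Defensive.
Import Order.TTheory GRing.Theory Num.Theory.
Local Open Scope ring_scope.

Section Support.
Variables (R : realFieldType) (S X : finType) (f : S -> X -> S -> R).

Definition support_step (A : {set S}) (x : X) : {set S} :=
  [set b | [exists c in A, 0 < f c x b]].

Definition support_run (A : {set S}) (w : seq X) : {set S} :=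
  foldl support_step A w.

Lemma bigmax_gt0 (h : S -> R) :
  (0 < \big[Order.max/0]_c h c) = [exists c, 0 < h c].
Proof.
apply/idP/idP => [|/existsP[c h_c]]; last exact: lt_le_trans h_c (le_bigmax _ _ _).
apply: contraTT => /existsPn h_le0; rewrite -leNgt.
by apply/bigmax_leP; split=> // c _; rewrite leNgt h_le0.
Qed.

Lemma support_ext_step (g : S -> R) (x : X) :
  [set b | 0 < ext_step f g x b] = support_step [set b | 0 < g b] x.
Proof.
apply/setP => b; rewrite !inE bigmax_gt0.
by apply: eq_existsb => c; rewrite lt_min inE.
Qed.

Lemma support_foldl_ext_step (g : S -> R) (w : seq X) :
  [set b | 0 < foldl (ext_step f) g w b] = support_run [set b | 0 < g b] w.
Proof. by elim: w g => [|x w IHw] g //=; rewrite IHw support_ext_step. Qed.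

Lemma support_ext_trans (a : S) (w : seq X) :
  [set b | 0 < ext_trans f a w b] = support_run [set a] w.
Proof.
rewrite support_foldl_ext_step; congr support_run; apply/setP => b.
by rewrite !inE eq_sym; case: eqP; rewrite ?ltr01 ?ltxx.
Qed.

Lemma mem_support_run (A : {set S}) (w : seq X) (b : S) :
  (b \in support_run A w) = [exists c in A, b \in support_run [set c] w].
Proof.
elim: w A => [|x w IHw] A /=.
  apply/idP/existsP => [b_A|[c /andP[c_A]]]; first by exists b; rewrite b_A set11.
  by rewrite inE => /eqP->.
rewrite IHw; apply/existsP/existsP => [[d /andP[+ b_d]]|[c /andP[c_A]]].
  rewrite inE => /existsP[c /andP[c_A f_cd]].
  exists c; rewrite c_A IHw; apply/existsP; exists d.
  by rewrite b_d andbT inE; apply/existsP; exists c; rewrite set11.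
rewrite IHw => /existsP[d /andP[+ b_d]].
rewrite inE => /existsP[c' /andP[/set1P-> f_cd]].
by exists d; rewrite b_d andbT inE; apply/existsP; exists c; rewrite c_A.
Qed.

Lemma support_run_neq0 (A : {set S}) (w : seq X) :
  (forall a x, support_step [set a] x != set0) ->
  A != set0 -> support_run A w != set0.
Proof.
move=> step_neq0; elim: w A => [|x w IHw] A //= /set0Pn[a a_A]; apply: IHw.
have /set0Pn[b] := step_neq0 a x.
rewrite inE => /existsP[c /andP[/set1P-> f_ab]].
by apply/set0Pn; exists b; rewrite inE; apply/existsP; exists a; rewrite a_A.
Qed.

End Support.

Section Reach.
Variables (R : realFieldType) (X : finType).

Definition D2_directing (F : fuzzy_automaton R X) (w : seq X) :=
  forall a b : F, reach a w = reach b w.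

Lemma reachE (F : fuzzy_automaton R X) (a : F) (w : seq X) :
  reach a w = support_run (@fa_trans R X F) [set a] w.
Proof. exact: support_ext_trans. Qed.

Lemma reach_cat (F : fuzzy_automaton R X) (a : F) (u v : seq X) :
  reach a (u ++ v) = support_run (@fa_trans R X F) (reach a u) v.
Proof. by rewrite !reachE /support_run foldl_cat. Qed.

Lemma mem_reach_cat (F : fuzzy_automaton R X) (a b : F) (u v : seq X) :
  (b \in reach a (u ++ v)) = [exists c in reach a u, b \in reach c v].
Proof.
rewrite reach_cat mem_support_run.
by apply: eq_existsb => c; rewrite [reach c v]reachE.
Qed.

Lemma complete_reach_neq0 (F : fuzzy_automaton R X) (a : F) (w : seq X) :
  complete_fa F -> reach a w != set0.
Proof.
move=> F_complete; rewrite reachE; apply: support_run_neq0; last first.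
  by apply/set0Pn; exists a; rewrite set11.
by move=> c x; have := F_complete c x; rewrite reachE.
Qed.

Lemma D2_directing_catr (F : fuzzy_automaton R X) (u v : seq X) :
  D2_directing F u -> D2_directing F (u ++ v).
Proof. by move=> u_dir a b; rewrite !reach_cat (u_dir a b). Qed.

Lemma reach_cat_directing (F : fuzzy_automaton R X) (a : F) (u v : seq X) :
  complete_fa F -> D2_directing F v -> reach a (u ++ v) = reach a v.
Proof.
move=> F_complete v_dir; apply/setP => b; rewrite mem_reach_cat.
apply/existsP/idP => [[c /andP[_]]|b_av]; first by rewrite (v_dir c a).
have /set0Pn[c c_au] := complete_reach_neq0 a u F_complete.
by exists c; rewrite c_au (v_dir c a).
Qed.

Lemma D2_directing_catl (F : fuzzy_automaton R X) (u v : seq X) :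
  complete_fa F -> D2_directing F v -> D2_directing F (u ++ v).
Proof.
by move=> F_complete v_dir a b; rewrite !reach_cat_directing ?(v_dir a b).
Qed.

Lemma support_run_prod (F G : fuzzy_automaton R X)
    (A : {set F}) (B : {set G}) (w : seq X) :
  support_run (@fa_trans R X (prod_fa F G)) (setX A B) w =
  setX (support_run (@fa_trans R X F) A w) (support_run (@fa_trans R X G) B w).
Proof.
elim: w A B => [|x w IHw] A B //=; rewrite -IHw; congr support_run.
apply/setP => -[p q]; rewrite !inE /=.
apply/existsP/andP => [[[c d]]|[/existsP[c /andP[c_A f_cp]] /existsP[d /andP[d_B g_dq]]]].
  rewrite inE /= /prod_trans lt_min => /andP[/andP[c_A d_B] /andP[f_cp g_dq]].
  by split; apply/existsP; [exists c; rewrite c_A | exists d; rewrite d_B].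
by exists (c, d); rewrite inE /= c_A d_B /prod_trans lt_min f_cp g_dq.
Qed.

Lemma reach_prod (F G : fuzzy_automaton R X) (a : F) (b : G) (w : seq X) :
  @reach R X (prod_fa F G) (a, b) w = setX (reach a w) (reach b w).
Proof.
rewrite !reachE -support_run_prod; congr support_run.
by apply/setP => -[p q]; rewrite !inE xpair_eqE.
Qed.

Lemma D2_directing_prod (F G : fuzzy_automaton R X) (w : seq X) :
  D2_directing F w -> D2_directing G w -> D2_directing (prod_fa F G) w.
Proof.
by move=> F_dir G_dir [a1 a2] [b1 b2]; rewrite !reach_prod (F_dir a1 b1) (G_dir a2 b2).
Qed.

End Reach.

Theorem proposition6p8 (R : realFieldType) (X : finType) (F G : fuzzy_automaton R X) :
  (0 < #|X|)%N ->
  complete_fa F -> complete_fa G -> D2_directable F -> D2_directable G ->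
  D2_directable (prod_fa F G).
Proof.
move=> _ _ G_complete [u u_dir] [v v_dir]; exists (u ++ v).
apply: D2_directing_prod; first exact: D2_directing_catr.
exact: D2_directing_catl.
Qed.
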